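(* Let $l\in\frac12\mathbb N$, $\mathfrak g=\mathfrak g^{(l)}$, and let $U(\mathfrak g)^{(f)}$ be the localization of $U(\mathfrak g)$ at $\{f^i:i\ge0\}$. For every $x\in\mathbb C$ there is a unique algebra automorphism $\theta_x$ of $U(\mathfrak g)^{(f)}$ such that $\theta_x(f)=f$, $\theta_x(h)=h-2x$, $\theta_x(e)=e+x(h-1-x)f^{-1}$ and $$\theta_x(p_j)=\sum_{k=0}^{2l-j}(-1)^k\binom{x}{k}\frac{(2l-j)!}{(2l-j-k)!}f^{-k}p_{j+k},\qquad j=0,1,\dots,2l.$$
   Context: For $l\in\frac12\mathbb N$, $\mathfrak g^{(l)}$ is the complex Lie algebra with basis $e,h,f,p_0,\dots,p_{2l}$ and brackets $[h,e]=2e$, $[h,f]=-2f$, $[e,f]=h$, $[h,p_k]=2(l-k)p_k$, $[e,p_k]=kp_{k-1}$, $[f,p_k]=(2l-k)p_{k+1}$ ($p_{-1}=p_{2l+1}=0$), $[p_k,p_{k'}]=0$. Since $\mathrm{ad}\,f$ is locally nilpotent on $U(\mathfrak g)$, $\{f^i\}$ is an Ore set. For $x\in\mathbb C$, $\binom{x}{k}=\frac{x(x-1)\cdots(x-k+1)}{k!}$. *)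

From HB Require Import structures.
From mathcomp Require Import all_boot all_order all_algebra.
Set Implicit Arguments. Unset Strict Implicit. Unset Printing Implicit Defensive.
Import Order.TTheory GRing.Theory Num.Theory.
Local Open Scope ring_scope.

Definition comm (R : pzRingType) (a b : R) : R := a * b - b * a.

Definition binomC (C : fieldType) (x : C) (k : nat) : C :=
  (\prod_(i < k) (x - i%:R)) / (k`!)%:R.

Definition alg_hom (C : fieldType) (A B : algType C) (phi : A -> B) : Prop :=
  [/\ forall a b, phi (a + b) = phi a + phi b,
      forall (c : C) a, phi (c *: a) = c *: phi a,
      forall a b, phi (a * b) = phi a * phi b
    & phi 1 = 1].

(* Elements e,h,f,p_0..p_n (n = 2l) of an algebra satisfying the bracket
   relations of g^(l), brackets being commutators. p : nat -> A, only the
   values p 0 .. p n are used (p_{-1} and p_{n+1} occur with coefficient 0). *)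
Definition g_rels (C : fieldType) (n : nat) (A : algType C)
    (e h f : A) (p : nat -> A) : Prop :=
  [/\ comm h e = e *+ 2, comm h f = - (f *+ 2) & comm e f = h] /\
  [/\ forall k, (k <= n)%N -> comm h (p k) = p k *~ (n%:Z - (2 * k)%:Z),
      forall k, (k <= n)%N -> comm e (p k) = p k.-1 *+ k,
      forall k, (k <= n)%N -> comm f (p k) = p k.+1 *+ (n - k)
    & forall k k', (k <= n)%N -> (k' <= n)%N -> comm (p k) (p k') = 0].

(* (A, e, h, f, p, finv) is the localization U(g^(l))^(f) of the enveloping
   algebra at the Ore set {f^i}, with its generators and finv = f^{-1},
   characterized by its universal property: algebra maps out of it correspond
   to images of the generators satisfying the relations of g with f invertible. *)
Definition is_loc_U (C : fieldType) (n : nat) (A : algType C)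
    (e h f : A) (p : nat -> A) (finv : A) : Prop :=
  [/\ g_rels n e h f p, f * finv = 1, finv * f = 1 &
   forall (B : algType C) (e' h' f' : B) (p' : nat -> B) (finv' : B),
     g_rels n e' h' f' p' -> f' * finv' = 1 -> finv' * f' = 1 ->
     (exists phi : A -> B, alg_hom phi /\ phi e = e' /\ phi h = h' /\
        phi f = f' /\ forall k, (k <= n)%N -> phi (p k) = p' k) /\
     (forall phi psi : A -> B, alg_hom phi -> alg_hom psi ->
        phi e = psi e -> phi h = psi h -> phi f = psi f ->
        (forall k, (k <= n)%N -> phi (p k) = psi (p k)) ->
        phi =1 psi)].

From HB Require Import structures.
From mathcomp Require Import all_boot all_order all_algebra.
From mathcomp Require Import ring zify.
From Stdlib Require Import FunctionalExtensionality.
Import Order.TTheory GRing.Theory Num.Theory.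
Local Open Scope ring_scope.
Set Implicit Arguments. Unset Strict Implicit.

(* Write g = f^{-1} and E(x), H(x), P_j(x) for the prescribed images of e, h,
   p_j.  For m natural, conjugation Ad_m a = f^{-m} a f^m is an algebra
   automorphism fixing f, and it sends e, h, p_j to E(m), H(m), P_j(m)
   (induction on m, using Ad_(m+1) = Ad_1 o Ad_m and the relations of g).
   The general case follows by interpolation: a polynomial function C -> A
   vanishing at every natural number vanishes identically (Vandermonde).
   Hence E(x), H(x), f, P_j(x) satisfy the relations of g for every x, and
   the universal property of the localization yields a homomorphism theta_x.
   Next, any endomorphism acting as theta_x on the generators maps E(y),
   H(y), P_j(y) to E(x+y), H(x+y), P_j(x+y) -- directly for E and H, by
   interpolation in x and y from Ad_m o Ad_m' = Ad_(m+m') for P_j -- so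
   theta_x o theta_(-x) fixes the generators and is the identity.  Bijectivity
   and uniqueness of theta_x thus both come from the uniqueness clause of the
   universal property. *)

Section PolynomialFunctions.
Variables (C : numFieldType) (A : algType C).

Definition polyfun (F : C -> A) : Prop :=
  exists (I : finType) (deg : I -> nat) (a : I -> A),
    forall x, F x = \sum_(i : I) x ^+ deg i *: a i.

Lemma polyfun_ext F G : polyfun F -> F =1 G -> polyfun G.
Proof. by move=> [I [d [a Ha]]] FG; exists I, d, a => x; rewrite -FG. Qed.

Lemma polyfun_const (a : A) : polyfun (fun _ => a).
Proof.
by exists 'I_1, (fun _ => 0%N), (fun _ => a) => x; rewrite big_ord1 expr0 scale1r.
Qed.

Lemma polyfun_add F G : polyfun F -> polyfun G -> polyfun (fun x => F x + G x).
Proof.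
move=> [I [d [a Ha]]] [J [d' [b Hb]]].
exists (I + J)%type, (fun k => match k with inl i => d i | inr j => d' j end),
  (fun k => match k with inl i => a i | inr j => b j end) => x.
by rewrite big_sumType /= Ha Hb.
Qed.

Lemma polyfun_mul F G : polyfun F -> polyfun G -> polyfun (fun x => F x * G x).
Proof.
move=> [I [d [a Ha]]] [J [d' [b Hb]]].
exists (I * J)%type, (fun i => (d i.1 + d' i.2)%N), (fun i => a i.1 * b i.2) => x.
rewrite Ha Hb mulr_suml -(pair_bigA _ (fun i j => x ^+ (d i + d' j) *: (a i * b j))).
apply: eq_bigr => i _; rewrite mulr_sumr; apply: eq_bigr => j _.
by rewrite -scalerAl -scalerAr scalerA exprD.
Qed.

Lemma polyfun_scal (q : {poly C}) F :
  polyfun F -> polyfun (fun x => q.[x] *: F x).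
Proof.
move=> [I [d [a Ha]]].
exists ('I_(size q) * I)%type, (fun i : 'I_(size q) * I => (i.1 + d i.2)%N),
  (fun i : 'I_(size q) * I => q`_i.1 *: a i.2) => x.
rewrite Ha horner_coef scaler_suml.
rewrite -(pair_bigA _ (fun (i : 'I_(size q)) j => x ^+ (i + d j) *: (q`_i *: a j))).
apply: eq_bigr => i _; rewrite scaler_sumr; apply: eq_bigr => j _.
by rewrite !scalerA exprD; congr (_ *: _); ring.
Qed.

Lemma polyfun_scale (c : C) F : polyfun F -> polyfun (fun x => c *: F x).
Proof. by move=> pF; apply: polyfun_ext (polyfun_scal c%:P pF) _ => x; rewrite hornerC. Qed.

Lemma polyfun_sub F G : polyfun F -> polyfun G -> polyfun (fun x => F x - G x).
Proof.
move=> pF /(polyfun_scale (-1)) pG; apply: polyfun_ext (polyfun_add pF pG) _ => x.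
by rewrite scaleN1r.
Qed.

Lemma polyfun_natmul F k : polyfun F -> polyfun (fun x => F x *+ k).
Proof. by move=> pF; apply: polyfun_ext (polyfun_scale k%:R pF) _ => x; rewrite scaler_nat. Qed.

Lemma polyfun_intmul F (k : int) : polyfun F -> polyfun (fun x => F x *~ k).
Proof. by move=> pF; apply: polyfun_ext (polyfun_scale k%:~R pF) _ => x; rewrite scaler_int. Qed.

Lemma polyfun_comm F G : polyfun F -> polyfun G -> polyfun (fun x => comm (F x) (G x)).
Proof. by move=> pF pG; exact: polyfun_sub (polyfun_mul pF pG) (polyfun_mul pG pF). Qed.

Lemma polyfun_sum a b (F : nat -> C -> A) : (forall i, polyfun (F i)) ->
  polyfun (fun x => \sum_(a <= i < b) F i x).
Proof.
move=> pF; elim: b => [|b IH].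
  by apply: polyfun_ext (polyfun_const 0) _ => x; rewrite big_geq.
case: (leqP a b) => [ab|ba].
  by apply: polyfun_ext (polyfun_add IH (pF b)) _ => x; rewrite big_nat_recr.
by apply: polyfun_ext (polyfun_const 0) _ => x; rewrite big_geq.
Qed.

Lemma polyfun_coef F : polyfun F ->
  exists d (c : 'I_d -> A), forall x, F x = \sum_(k < d) x ^+ k *: c k.
Proof.
move=> [I [d [a Ha]]].
pose D := (\max_(i : I) d i).+1.
have dlt i : (d i < D)%N by rewrite ltnS; exact: leq_bigmax.
exists D, (fun k => \sum_(i | Ordinal (dlt i) == k) a i) => x.
rewrite Ha (partition_big (fun i => Ordinal (dlt i)) xpredT) //=.
apply: eq_bigr => k _; rewrite scaler_sumr.
by apply: eq_bigr => i /eqP <-.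
Qed.

(* Identity theorem: a polynomial function vanishing at every natural number
   vanishes; the Vandermonde matrix of 0, ..., d-1 is invertible in char 0. *)
Lemma polyfun_vanish F : polyfun F -> (forall m : nat, F m%:R = 0) -> F =1 fun=> 0.
Proof.
move=> /polyfun_coef [d [c Hc]] F0.
suff c0 k : c k = 0 by move=> x; rewrite Hc big1 // => k _; rewrite c0 scaler0.
pose V : 'M[C]_d := Vandermonde d (\row_(j < d) (j%:R : C)).
have Vunit : V \in unitmx.
  rewrite unitmxE unitfE det_Vandermonde; apply/prodf_neq0 => i _.
  apply/prodf_neq0 => j ij; rewrite !mxE subr_eq0 eqr_nat.
  by rewrite neq_ltn ij orbT.
have Vc j : \sum_(i < d) V i j *: c i = 0.
  by rewrite -[RHS](F0 j) Hc; apply: eq_bigr => i _; rewrite !mxE.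
have := congr1 (fun M : 'M[C]_d => \sum_(i < d) M i k *: c i) (mulmxV Vunit).
rewrite [RHS](bigD1 k) //= [in RHS]big1 => [|i ik]; last first.
  by rewrite mxE (negbTE ik) scale0r.
rewrite mxE eqxx scale1r addr0 => <-.
under eq_bigr do rewrite mxE scaler_suml.
rewrite exchange_big /= big1 // => j _.
under eq_bigr do rewrite mulrC -scalerA.
by rewrite -scaler_sumr Vc scaler0.
Qed.

Lemma polyfun_eq F G : polyfun F -> polyfun G ->
  (forall m : nat, F m%:R = G m%:R) -> F =1 G.
Proof.
move=> pF pG FG x; apply/eqP; rewrite -subr_eq0; apply/eqP.
by apply: (polyfun_vanish (polyfun_sub pF pG)) => m; rewrite FG subrr.
Qed.

Lemma polyfun_eq2 (F G : C -> C -> A) :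
  (forall y, polyfun (F ^~ y)) -> (forall y, polyfun (G ^~ y)) ->
  (forall x, polyfun (F x)) -> (forall x, polyfun (G x)) ->
  (forall m m' : nat, F m%:R m'%:R = G m%:R m'%:R) -> forall x y, F x y = G x y.
Proof.
move=> pF1 pG1 pF2 pG2 FG x.
apply: (polyfun_eq (pF2 x) (pG2 x)) => m'; move: x.
by apply: (polyfun_eq (pF1 _) (pG1 _)) => m; exact: FG.
Qed.

End PolynomialFunctions.

Section Binomial.
Variable C : numFieldType.

Lemma natr_fact_neq0 (k : nat) : ((k`!)%:R : C) != 0.
Proof. by rewrite pnatr_eq0 -lt0n fact_gt0. Qed.

Lemma binomC0 (x : C) : binomC x 0 = 1.
Proof. by rewrite /binomC big_ord0 fact0 divr1. Qed.

Lemma binomC0S k : binomC (0 : C) k.+1 = 0.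
Proof. by rewrite /binomC big_ord_recl subrr !mul0r. Qed.

Lemma binomCS (x : C) k : binomC (x + 1) k.+1 = binomC x k.+1 + binomC x k.
Proof.
have top : \prod_(i < k.+1) (x + 1 - i%:R) = (x + 1) * \prod_(i < k) (x - i%:R).
  rewrite big_ord_recl subr0; congr (_ * _); apply: eq_bigr => i _.
  by rewrite lift0 -natr1; ring.
rewrite /binomC top big_ord_recr factS natrM /=.
have kS0 : (k.+1%:R : C) != 0 by rewrite pnatr_eq0.
have := natr_fact_neq0 k; rewrite -natr1 in kS0 * => k0.
by field; rewrite kS0 k0.
Qed.

Lemma binomC_poly (c : C) k : exists q : {poly C}, forall y, binomC (c + y) k = q.[y].
Proof.
exists ((k`!)%:R^-1%:P * \prod_(i < k) ('X + (c - i%:R)%:P)) => y.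
rewrite hornerM hornerC horner_prod /binomC mulrC; congr (_ * _).
by apply: eq_bigr => i _; rewrite hornerD hornerX hornerC addrCA addrA.
Qed.

(* The coefficient of f^{-k} p_{j+k} in theta_x(p_j), for N = 2l - j. *)
Definition thetaCoef (x : C) (N k : nat) : C :=
  (-1) ^+ k * binomC x k * (N`!)%:R / ((N - k)`!)%:R.

Lemma thetaCoef0 x N : thetaCoef x N 0 = 1.
Proof. by rewrite /thetaCoef binomC0 subn0 expr0 !mul1r mulfV ?natr_fact_neq0. Qed.

Lemma thetaCoef0S N k : thetaCoef 0 N k.+1 = 0.
Proof. by rewrite /thetaCoef binomC0S mulr0 !mul0r. Qed.

(* The recursion behind Ad_1 (P_j(x)) = P_j(x + 1), see Ad1_thetaP. *)
Lemma thetaCoefS x N k : (k < N)%N ->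
  thetaCoef x N k.+1 - thetaCoef x N k * (N - k)%:R = thetaCoef (x + 1) N k.+1.
Proof.
move=> kN; rewrite /thetaCoef binomCS -(subnSK kN) factS natrM exprS.
have r0 : ((N - k.+1).+1%:R : C) != 0 by rewrite pnatr_eq0.
have := natr_fact_neq0 (N - k.+1); rewrite -natr1 in r0 * => f0.
by field; rewrite r0 f0.
Qed.

Lemma polyfun_thetaCoef (A : algType C) (c : C) N k (a : A) :
  polyfun (fun y => thetaCoef (c + y) N k *: a).
Proof.
have [q Hq] := binomC_poly c k.
apply: polyfun_ext (polyfun_scale ((-1) ^+ k * (N`!)%:R / ((N - k)`!)%:R)
  (polyfun_scal q (polyfun_const a))) _ => y.
by rewrite scalerA -Hq /thetaCoef; congr (_ *: _); ring.
Qed.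

End Binomial.

Section AlgebraHomomorphisms.
Variables (C : fieldType) (A B : algType C) (phi : A -> B).
Hypothesis phi_hom : alg_hom phi.

Lemma alg_homD a b : phi (a + b) = phi a + phi b.
Proof. by case: phi_hom. Qed.

Lemma alg_homZ c a : phi (c *: a) = c *: phi a.
Proof. by case: phi_hom. Qed.

Lemma alg_homM a b : phi (a * b) = phi a * phi b.
Proof. by case: phi_hom. Qed.

Lemma alg_hom1 : phi 1 = 1.
Proof. by case: phi_hom. Qed.

Lemma alg_hom0 : phi 0 = 0.
Proof. by rewrite -(scale0r 0) alg_homZ !scale0r. Qed.

Lemma alg_homN a : phi (- a) = - phi a.
Proof. by rewrite -scaleN1r alg_homZ scaleN1r. Qed.

Lemma alg_homB a b : phi (a - b) = phi a - phi b.
Proof. by rewrite alg_homD alg_homN. Qed.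

Lemma alg_homMn a k : phi (a *+ k) = phi a *+ k.
Proof. by rewrite -!scaler_nat alg_homZ. Qed.

Lemma alg_homMz a k : phi (a *~ k) = phi a *~ k.
Proof. by rewrite -!scaler_int alg_homZ. Qed.

Lemma alg_homX a k : phi (a ^+ k) = phi a ^+ k.
Proof. by elim: k => [|k IH]; rewrite ?expr0 ?alg_hom1 // !exprS alg_homM IH. Qed.

Lemma alg_hom_scalar c : phi c%:A = c%:A.
Proof. by rewrite alg_homZ alg_hom1. Qed.

Lemma alg_hom_comm a b : phi (comm a b) = comm (phi a) (phi b).
Proof. by rewrite /comm alg_homB !alg_homM. Qed.

Lemma alg_hom_sum a b (F : nat -> A) :
  phi (\sum_(a <= i < b) F i) = \sum_(a <= i < b) phi (F i).
Proof. exact: (big_morph phi alg_homD alg_hom0). Qed.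

Lemma g_rels_hom n e h f p :
  g_rels n e h f p -> g_rels n (phi e) (phi h) (phi f) (phi \o p).
Proof.
case=> [[Rhe Rhf Ref] [Rhp Rep Rfp Rpp]].
split; split=> /=.
- by rewrite -alg_hom_comm Rhe alg_homMn.
- by rewrite -alg_hom_comm Rhf alg_homN alg_homMn.
- by rewrite -alg_hom_comm Ref.
- by move=> k kn; rewrite -alg_hom_comm Rhp // alg_homMz.
- by move=> k kn; rewrite -alg_hom_comm Rep // alg_homMn.
- by move=> k kn; rewrite -alg_hom_comm Rfp // alg_homMn.
- by move=> k k' kn kn'; rewrite -alg_hom_comm Rpp // alg_hom0.
Qed.

End AlgebraHomomorphisms.

Lemma alg_hom_comp (C : fieldType) (A B D : algType C) (phi : B -> D) (psi : A -> B) :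
  alg_hom phi -> alg_hom psi -> alg_hom (phi \o psi).
Proof.
move=> hphi hpsi; split=> /= [a b|c a|a b|].
- by rewrite !alg_homD.
- by rewrite !alg_homZ.
- by rewrite !alg_homM.
- by rewrite !alg_hom1.
Qed.

Lemma alg_hom_inv (C : fieldType) (A : algType C) (phi : A -> A) (f g : A) :
  alg_hom phi -> f * g = 1 -> g * f = 1 -> phi f = f -> phi g = g.
Proof.
move=> hphi fg gf phif.
by rewrite -[phi g]mulr1 -fg mulrA -phif -alg_homM // gf alg_hom1 // mul1r.
Qed.

Lemma g_rels_ext (C : fieldType) (n : nat) (A : algType C) (e h f : A)
    (p p' : nat -> A) :
  (forall k, (k <= n)%N -> p k = p' k) -> g_rels n e h f p -> g_rels n e h f p'.
Proof.
move=> pp' [R1 [Rhp Rep Rfp Rpp]]; split=> //; split=> [k kn|k kn|k kn|k k' kn kn'].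
- by rewrite -!pp' // Rhp.
- by rewrite -!pp' ?Rep // (leq_trans (leq_pred k) kn).
- rewrite -pp' // Rfp //; case: (ltnP k n) => [kn'|nk]; first by rewrite pp'.
  by rewrite (_ : n - k = 0)%N ?mulr0n //; apply/eqP; rewrite subn_eq0.
- by rewrite -!pp' // Rpp.
Qed.

Section Theta.
Variables (C : numFieldType) (n : nat) (A : algType C).
Variables (e h f : A) (p : nat -> A) (g : A).
Hypotheses (rels : g_rels n e h f p) (fg : f * g = 1) (gf : g * f = 1).

Definition thetaE (x : C) : A := e + x *: ((h - (1 + x)%:A) * g).
Definition thetaH (x : C) : A := h - (2%:R * x)%:A.
Definition thetaP (x : C) (j : nat) : A :=
  \sum_(0 <= k < (n - j).+1) thetaCoef x (n - j) k *: (g ^+ k * p (j + k)%N).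

(* Conjugation by f^{-m}, an automorphism that realizes theta_m. *)
Definition Ad (m : nat) (a : A) : A := g ^+ m * a * f ^+ m.

Lemma fg_exp m : f ^+ m * g ^+ m = 1.
Proof. by rewrite -exprMn_comm ?fg ?expr1n // /GRing.comm fg gf. Qed.

Lemma gf_exp m : g ^+ m * f ^+ m = 1.
Proof. by rewrite -exprMn_comm ?gf ?expr1n // /GRing.comm fg gf. Qed.

Lemma Ad_hom m : alg_hom (Ad m).
Proof.
split=> [a b|c a|a b|]; rewrite /Ad.
- by rewrite mulrDr mulrDl.
- by rewrite -scalerAr -scalerAl.
- by rewrite !mulrA -[g ^+ m * a * f ^+ m * g ^+ m]mulrA fg_exp mulr1.
- by rewrite mulr1 gf_exp.
Qed.

Lemma Ad0 a : Ad 0 a = a.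
Proof. by rewrite /Ad !expr0 mul1r mulr1. Qed.

Lemma Ad_comp m m' a : Ad m (Ad m' a) = Ad (m + m') a.
Proof. by rewrite /Ad !mulrA -exprD -!mulrA -exprD [(m' + m)%N]addnC. Qed.

Lemma Ad_f m : Ad m f = f.
Proof. by rewrite /Ad -mulrA -exprS exprSr mulrA gf_exp mul1r. Qed.

Lemma Ad_g m : Ad m g = g.
Proof. exact: alg_hom_inv (Ad_hom m) fg gf (Ad_f m). Qed.

Definition ehg (a b c : C) : A := a *: e + b *: (h * g) + c *: g.

Lemma ehg_add a b c a' b' c' : ehg a b c + ehg a' b' c' = ehg (a + a') (b + b') (c + c').
Proof. by rewrite /ehg addrACA [X in X + _]addrACA -!scalerDl. Qed.

Lemma ehg_scale s a b c : s *: ehg a b c = ehg (s * a) (s * b) (s * c).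
Proof. by rewrite /ehg !scalerDr !scalerA. Qed.

Lemma thetaE_ehg x : thetaE x = ehg 1 x (- (x * (1 + x))).
Proof. by rewrite /thetaE /ehg mulrBl mulr_algl scalerBr scalerA scale1r scaleNr addrA. Qed.

Lemma thetaH_ehg x y : (thetaH x - y%:A) * g = ehg 0 1 (- (2%:R * x + y)).
Proof.
rewrite /thetaH /ehg -addrA -opprD -scalerDl mulrBl mulr_algl.
by rewrite scale0r add0r scale1r scaleNr.
Qed.

Lemma thetaE_add x y : thetaE x + y *: ((thetaH x - (1 + y)%:A) * g) = thetaE (x + y).
Proof. by rewrite !thetaE_ehg thetaH_ehg ehg_scale ehg_add; congr ehg; ring. Qed.

Lemma thetaH_add x y : thetaH x - (2%:R * y)%:A = thetaH (x + y).
Proof. by rewrite /thetaH -addrA -opprD -scalerDl mulrDr. Qed.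

Lemma thetaE0 : thetaE 0 = e.
Proof. by rewrite /thetaE scale0r addr0. Qed.

Lemma thetaH0 : thetaH 0 = h.
Proof. by rewrite /thetaH mulr0 scale0r subr0. Qed.

Lemma thetaP0 j : thetaP 0 j = p j.
Proof.
rewrite /thetaP big_nat_recl // thetaCoef0 expr0 mul1r addn0 scale1r.
by rewrite big1_seq ?addr0 // => k _; rewrite thetaCoef0S scale0r.
Qed.

(* Ad_1 on the generators, computed from their brackets with f.
   From [h, f] = -2f:  f^{-1} h = h f^{-1} - 2 f^{-1}. *)
Lemma g_h : g * h = h * g - g *+ 2.
Proof.
case: rels => [[_ Rhf _] _].
have := congr1 (fun z => g * z * g) Rhf; rewrite /comm /=.
rewrite mulrBr mulrBl !mulrA gf mul1r -(mulrA _ f g) fg mulr1.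
rewrite mulrN mulNr mulrnAr mulrnAl gf mul1r => /eqP; rewrite subr_eq => /eqP ->.
by rewrite addrC.
Qed.

Lemma Ad1_h : Ad 1 h = thetaH 1.
Proof.
case: rels => [[_ Rhf _] _].
move: Rhf; rewrite /comm => /eqP; rewrite subr_eq => /eqP Rhf.
rewrite /Ad !expr1 -mulrA Rhf mulrDr mulrN mulrnAr gf mulrA gf mul1r addrC.
by rewrite /thetaH mulr1 scaler_nat.
Qed.

Lemma Ad1_e : Ad 1 e = thetaE 1.
Proof.
case: rels => [[_ _ Ref] _].
move: Ref; rewrite /comm => /eqP; rewrite subr_eq => /eqP Ref.
rewrite /Ad !expr1 -mulrA Ref mulrDr mulrA gf mul1r g_h addrC.
rewrite thetaE_ehg /ehg !scale1r -addrA; congr (_ + (_ + _)).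
by rewrite -scaler_nat -scaleNr; congr (_ *: _); ring.
Qed.

Lemma Ad1_p a : (a <= n)%N -> Ad 1 (p a) = p a - g * p a.+1 *+ (n - a).
Proof.
case: rels => [_ [_ _ Rfp _]] an.
have := Rfp a an; rewrite /comm => /eqP; rewrite subr_eq addrC -subr_eq => /eqP Ef.
by rewrite /Ad !expr1 -mulrA -Ef mulrBr mulrA gf mul1r mulrnAr.
Qed.

Section Homomorphisms.
Variable phi : A -> A.
Hypotheses (phi_hom : alg_hom phi) (phi_g : phi g = g).

Lemma hom_thetaH x : phi h = thetaH x -> forall y, phi (thetaH y) = thetaH (x + y).
Proof.
by move=> phi_h y; rewrite {1}/thetaH alg_homB // alg_hom_scalar // phi_h thetaH_add.
Qed.

Lemma hom_thetaE x : phi e = thetaE x -> phi h = thetaH x ->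
  forall y, phi (thetaE y) = thetaE (x + y).
Proof.
move=> phi_e phi_h y.
rewrite {1}/thetaE alg_homD // alg_homZ // alg_homM // alg_homB // alg_hom_scalar //.
by rewrite phi_e phi_h phi_g thetaE_add.
Qed.

Lemma hom_thetaP_expand y j : phi (thetaP y j) =
  \sum_(0 <= k < (n - j).+1) thetaCoef y (n - j) k *: (g ^+ k * phi (p (j + k)%N)).
Proof.
rewrite /thetaP alg_hom_sum //; apply: eq_bigr => k _.
by rewrite alg_homZ // alg_homM // alg_homX // phi_g.
Qed.

End Homomorphisms.

(* Ad_1 shifts the parameter of P_j by 1, by the recursion thetaCoefS. *)
Lemma Ad1_thetaP x j : (j <= n)%N -> Ad 1 (thetaP x j) = thetaP (x + 1) j.
Proof.
move=> jn; rewrite (hom_thetaP_expand (Ad_hom 1) (Ad_g 1)) /thetaP !big_mkord.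
set N := (n - j)%N.
have step k : (k < N.+1)%N -> thetaCoef x N k *: (g ^+ k * Ad 1 (p (j + k)%N)) =
    thetaCoef x N k *: (g ^+ k * p (j + k)%N) -
    (thetaCoef x N k * (N - k)%:R) *: (g ^+ k.+1 * p (j + k.+1)%N).
  move=> kN; rewrite Ad1_p; last by rewrite /N in kN; lia.
  rewrite mulrBr scalerBr [g ^+ k * (_ *+ _)]mulrnAr mulrA -exprSr addnS subnDA -/N.
  by rewrite -scaler_nat scalerA.
under eq_bigr => i _ do rewrite (step _ (ltn_ord i)).
rewrite sumrB [X in _ - X]big_ord_recr /= subnn mulr0 scale0r addr0.
rewrite big_ord_recl [RHS]big_ord_recl /= !thetaCoef0 -addrA; congr (_ + _).
by rewrite -sumrB; apply: eq_bigr => i _; rewrite -scalerBl thetaCoefS.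
Qed.

Lemma Ad_h m : Ad m h = thetaH m%:R.
Proof.
elim: m => [|m IH]; first by rewrite Ad0 thetaH0.
by rewrite -[in LHS]add1n -Ad_comp IH (hom_thetaH (Ad_hom 1) Ad1_h) -mulrS.
Qed.

Lemma Ad_e m : Ad m e = thetaE m%:R.
Proof.
elim: m => [|m IH]; first by rewrite Ad0 thetaE0.
rewrite -[in LHS]add1n -Ad_comp IH.
by rewrite (hom_thetaE (Ad_hom 1) (Ad_g 1) Ad1_e Ad1_h) -mulrS.
Qed.

Lemma Ad_p m j : (j <= n)%N -> Ad m (p j) = thetaP m%:R j.
Proof.
move=> jn; elim: m => [|m IH]; first by rewrite Ad0 thetaP0.
by rewrite -[in LHS]add1n -Ad_comp IH Ad1_thetaP // natr1.
Qed.

Lemma g_rels_Ad m : g_rels n (thetaE m%:R) (thetaH m%:R) f (thetaP m%:R).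
Proof.
have := g_rels_hom (Ad_hom m) rels; rewrite Ad_e Ad_h Ad_f.
by apply: g_rels_ext => k kn /=; rewrite Ad_p.
Qed.

Lemma polyfun_thetaE : polyfun thetaE.
Proof.
have pB := polyfun_sub (polyfun_const h) (polyfun_scal (1 + 'X) (polyfun_const (1 : A))).
apply: polyfun_ext (polyfun_add (polyfun_const e)
  (polyfun_scal 'X (polyfun_mul pB (polyfun_const g)))) _ => x.
by rewrite /thetaE !hornerE.
Qed.

Lemma polyfun_thetaH : polyfun thetaH.
Proof.
apply: polyfun_ext (polyfun_sub (polyfun_const h)
  (polyfun_scal (2%:R *: 'X) (polyfun_const (1 : A)))) _ => x.
by rewrite /thetaH !hornerE.
Qed.

Lemma polyfun_thetaP c j : polyfun (fun y => thetaP (c + y) j).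
Proof. by apply: polyfun_sum => k; exact: polyfun_thetaCoef. Qed.

Lemma polyfun_thetaP0 j : polyfun (thetaP ^~ j).
Proof. by apply: polyfun_ext (polyfun_thetaP 0 j) _ => y; rewrite add0r. Qed.

(* The images satisfy the relations of g for every x: they do for x = m
   natural, and both sides of each relation are polynomial in x. *)
Lemma g_rels_theta x : g_rels n (thetaE x) (thetaH x) f (thetaP x).
Proof.
have pE := polyfun_thetaE; have pH := polyfun_thetaH.
have pf := polyfun_const f; have pP := polyfun_thetaP0.
have R := g_rels_Ad.
split; split.
- apply: (polyfun_eq (polyfun_comm pH pE) (polyfun_natmul 2 pE) _ x) => m.
  by have [[? _ _] _] := R m.
- apply: (polyfun_eq (polyfun_comm pH pf) (polyfun_const _) _ x) => m.
  by have [[_ ? _] _] := R m.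
- apply: (polyfun_eq (polyfun_comm pE pf) pH _ x) => m.
  by have [[_ _ ?] _] := R m.
- move=> k kn.
  apply: (polyfun_eq (polyfun_comm pH (pP k)) (polyfun_intmul _ (pP k)) _ x) => m.
  by have [_ [Rhp _ _ _]] := R m; exact: Rhp.
- move=> k kn.
  apply: (polyfun_eq (polyfun_comm pE (pP k)) (polyfun_natmul k (pP _)) _ x) => m.
  by have [_ [_ Rep _ _]] := R m; exact: Rep.
- move=> k kn.
  apply: (polyfun_eq (polyfun_comm pf (pP k)) (polyfun_natmul _ (pP _)) _ x) => m.
  by have [_ [_ _ Rfp _]] := R m; exact: Rfp.
- move=> k k' kn kn'.
  apply: (polyfun_eq (polyfun_comm (pP k) (pP k')) (polyfun_const 0) _ x) => m.
  by have [_ [_ _ _ Rpp]] := R m; exact: Rpp.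
Qed.

(* The images of p_j compose additively in the parameter: true for natural
   parameters since Ad_m o Ad_m' = Ad_(m+m'), hence for all by polynomiality. *)
Lemma thetaP_add x y j : (j <= n)%N ->
  \sum_(0 <= k < (n - j).+1) thetaCoef y (n - j) k *: (g ^+ k * thetaP x (j + k)%N)
  = thetaP (x + y) j.
Proof.
move=> jn; move: x y; apply: polyfun_eq2 => [y|y|x|x|m m'].
- apply: polyfun_sum => k.
  exact: polyfun_scale (polyfun_mul (polyfun_const _) (polyfun_thetaP0 _)).
- by apply: polyfun_ext (polyfun_thetaP y j) _ => x; rewrite addrC.
- apply: polyfun_sum => k.
  by apply: polyfun_ext (polyfun_thetaCoef 0 _ k _) _ => y; rewrite add0r.
- exact: polyfun_thetaP.
rewrite -natrD -(Ad_p (m + m')) // -Ad_comp Ad_p //.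
rewrite (hom_thetaP_expand (Ad_hom m) (Ad_g m)).
by apply: eq_big_nat => k /andP[_ kN]; rewrite Ad_p //; lia.
Qed.

Lemma hom_thetaP phi x : alg_hom phi -> phi g = g ->
  (forall k, (k <= n)%N -> phi (p k) = thetaP x k) ->
  forall y j, (j <= n)%N -> phi (thetaP y j) = thetaP (x + y) j.
Proof.
move=> phi_hom phi_g phi_p y j jn.
rewrite (hom_thetaP_expand phi_hom phi_g) -thetaP_add //.
by apply: eq_big_nat => k /andP[_ kN]; rewrite phi_p //; lia.
Qed.

Definition is_theta (phi : A -> A) (x : C) : Prop :=
  [/\ alg_hom phi, phi f = f, phi h = thetaH x, phi e = thetaE x
    & forall k, (k <= n)%N -> phi (p k) = thetaP x k].

Lemma is_theta_id : is_theta id 0.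
Proof. by split=> //; rewrite ?thetaH0 ?thetaE0 // => k _; rewrite thetaP0. Qed.

Lemma is_theta_comp phi psi x y :
  is_theta phi x -> is_theta psi y -> is_theta (phi \o psi) (x + y).
Proof.
move=> [phi_hom phi_f phi_h phi_e phi_p] [psi_hom psi_f psi_h psi_e psi_p].
have phi_g := alg_hom_inv phi_hom fg gf phi_f.
split=> /=.
- exact: alg_hom_comp.
- by rewrite psi_f.
- by rewrite psi_h (hom_thetaH phi_hom phi_h).
- by rewrite psi_e (hom_thetaE phi_hom phi_g phi_e phi_h).
- by move=> k kn; rewrite psi_p // (hom_thetaP phi_hom phi_g phi_p).
Qed.

End Theta.

Theorem mainTheorem13 (C : numClosedFieldType) (n : nat) (A : algType C)
    (e h f : A) (p : nat -> A) (finv : A) :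
  is_loc_U n e h f p finv ->
  forall x : C,
  exists! theta : A -> A,
    [/\ alg_hom theta, bijective theta &
        theta f = f] /\ [/\
        theta h = h - (2%:R * x)%:A,
        theta e = e + x *: ((h - (1 + x)%:A) * finv)
      & forall j, (j <= n)%N ->
          theta (p j) =
          \sum_(0 <= k < (n - j).+1)
             ((-1) ^+ k * binomC x k * ((n - j)`!)%:R / ((n - j - k)`!)%:R)
               *: (finv ^+ k * p (j + k)%N)].
Proof.
move=> [rels fg gf univ] x.
have theta_unique phi psi y :
    is_theta n e h f p finv phi y -> is_theta n e h f p finv psi y -> phi =1 psi.
  move=> [? phi_f phi_h phi_e phi_p] [? psi_f psi_h psi_e psi_p].
  apply: (univ A e h f p finv rels fg gf).2 => //; first by rewrite phi_e psi_e.
  - by rewrite phi_h psi_h.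
  - by rewrite phi_f psi_f.
  - by move=> k kn; rewrite phi_p ?psi_p.
have theta_exists y : exists phi, is_theta n e h f p finv phi y.
  have [[phi [? [? [? [? ?]]]]] _] :=
    univ A _ _ _ _ _ (g_rels_theta rels fg gf y) fg gf.
  by exists phi.
have theta_cancel phi psi y :
    is_theta n e h f p finv phi y -> is_theta n e h f p finv psi (- y) -> cancel psi phi.
  move=> phi_y psi_y; apply: (theta_unique _ _ 0 _ (is_theta_id n e h f p finv)).
  by have := is_theta_comp rels fg gf phi_y psi_y; rewrite subrr.
have [theta th_x] := theta_exists x; have [theta' th'_x] := theta_exists (- x).
exists theta; split.
  have [? ? ? ? ?] := th_x; split; split=> //.
  exists theta'; first by apply: theta_cancel th'_x _; rewrite opprK.
  exact: theta_cancel th_x th'_x.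
move=> theta2 [[? _ ?] [? ? ?]]; apply: functional_extensionality.
by apply: theta_unique th_x _; split.
Qed.
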